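(* Let $G$ be a torsion abelian group with $G=H+K$ for subgroups $H,K\leq G$, and let $\varphi\colon G\to G$ be an endomorphism with $\varphi H\subseteq H$ and $\varphi K\subseteq K$. If the restrictions $\varphi|_H\colon H\to H$ and $\varphi|_K\colon K\to K$ are positively expansive endomorphisms, then $\varphi$ is positively expansive. Analogously, if $\varphi$ is an automorphism whose restrictions $\varphi|_H$ and $\varphi|_K$ are expansive automorphisms of $H$ and $K$, then $\varphi$ is an expansive automorphism.
   Context: $\mathbb N=\{0,1,2,\dots\}$. An endomorphism $\varphi$ of an abelian group $G$ is positively expansive if there is a finite subgroup $S\leq G$ such that for every finite subgroup $F\leq G$ there is $n\in\mathbb N$ with $F\subseteq\sum_{k=0}^n\varphi^kS$. An automorphism $\varphi$ is expansive if there is a finite subgroup $S\leq G$ such that for every finite subgroup $F\leq G$ there is $n\in\mathbb N$ with $F\subseteq\sum_{|k|\leq n}\varphi^kS$. *)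

From HB Require Import structures.
From mathcomp Require Import all_boot all_order all_algebra.
Set Implicit Arguments. Unset Strict Implicit. Unset Printing Implicit Defensive.
Import GRing.Theory.
Local Open Scope ring_scope.

Section Defs.
Variable G : zmodType.

Definition is_subgroup (H : G -> Prop) : Prop :=
  H 0 /\ (forall x y, H x -> H y -> H (x - y)).

Definition finite_set (A : G -> Prop) : Prop :=
  exists s : seq G, forall x, A x <-> x \in s.

Definition finite_subgroup_of (H F : G -> Prop) : Prop :=
  [/\ is_subgroup F, finite_set F & forall x, F x -> H x].

Definition torsion_group : Prop :=
  forall x : G, exists n : nat, (0 < n)%N /\ x *+ n = 0.

(* sum_{k=0}^n phi^k S *)
Definition pos_orbit_sum (phi : G -> G) (S : G -> Prop) (n : nat) (x : G) :=
  exists g : nat -> G, (forall k, (k <= n)%N -> S (g k)) /\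
    x = \sum_(k < n.+1) iter k phi (g k).

(* sum_{|k|<=n} phi^k S, where psi = phi^{-1} *)
Definition orbit_sum (phi psi : G -> G) (S : G -> Prop) (n : nat) (x : G) :=
  exists g h : nat -> G,
    (forall k, (k <= n)%N -> S (g k) /\ S (h k)) /\
    x = \sum_(k < n.+1) (iter k phi (g k) + iter k psi (h k)).

(* The restriction of phi to the phi-invariant subgroup H is positively
   expansive (finite subgroups of H are the finite subgroups of G inside H). *)
Definition pos_expansive_on (H : G -> Prop) (phi : G -> G) : Prop :=
  exists S, finite_subgroup_of H S /\
    forall F, finite_subgroup_of H F ->
      exists n : nat, forall x, F x -> pos_orbit_sum phi S n x.

Definition expansive_on (H : G -> Prop) (phi psi : G -> G) : Prop :=
  exists S, finite_subgroup_of H S /\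
    forall F, finite_subgroup_of H F ->
      exists n : nat, forall x, F x -> orbit_sum phi psi S n x.

Definition pos_expansive (phi : G -> G) := pos_expansive_on (fun _ => True) phi.
Definition expansive (phi psi : G -> G) := expansive_on (fun _ => True) phi psi.

End Defs.

(** Given a finite subgroup F of G = H + K, write each of its finitely many
  elements as h + k; as G is torsion, the h's and k's generate finite subgroups
  F_H of H and F_K of K with F contained in F_H + F_K. If S_H and S_K witness
  the (positive) expansivity of the restrictions, then F_H and F_K are covered
  by the orbit sums of S_H and S_K up to some n, hence F is covered by the orbit
  sum of the finite subgroup S_H + S_K up to the same n, since phi^k is
  additive. *)

From HB Require Import structures.
From mathcomp Require Import all_boot all_order all_algebra.
Import GRing.Theory.
Local Open Scope ring_scope.
Set Implicit Arguments. Unset Strict Implicit.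

Section FiniteSubgroups.
Variable G : zmodType.
Implicit Types (H S T : G -> Prop) (h x y : G).

Lemma subgroup0 H : is_subgroup H -> H 0.
Proof. by case. Qed.

Lemma subgroupD H : is_subgroup H -> forall x y, H x -> H y -> H (x + y).
Proof.
move=> [H0 HB] x y Hx Hy.
by have := HB x (0 - y) Hx (HB _ _ H0 Hy); rewrite sub0r opprK.
Qed.

Lemma subgroupMn H : is_subgroup H -> forall x n, H x -> H (x *+ n).
Proof.
move=> sH x n Hx; elim: n => [|n IHn]; first by rewrite mulr0n; apply: subgroup0.
by rewrite mulrS; apply: subgroupD.
Qed.

Lemma finite_subgroup_of_sub H1 H2 S :
  (forall x, H1 x -> H2 x) -> finite_subgroup_of H1 S -> finite_subgroup_of H2 S.
Proof. by move=> sH12 [sS fS SH1]; split=> // x /SH1 /sH12. Qed.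

Definition sumset S T x := exists a b, S a /\ T b /\ x = a + b.

Lemma sumset_sub S1 S2 T1 T2 x : (forall y, S1 y -> S2 y) ->
  (forall y, T1 y -> T2 y) -> sumset S1 T1 x -> sumset S2 T2 x.
Proof. by move=> sS sT [a [b [Sa [Tb ->]]]]; exists a, b; auto. Qed.

Lemma sumsetl S T x : T 0 -> S x -> sumset S T x.
Proof. by move=> T0 Sx; exists x, 0; rewrite addr0. Qed.

Lemma sumsetr S T x : S 0 -> T x -> sumset S T x.
Proof. by move=> S0 Tx; exists 0, x; rewrite add0r. Qed.

Lemma finite_subgroup_sumset H S T : is_subgroup H ->
  finite_subgroup_of H S -> finite_subgroup_of H T ->
  finite_subgroup_of H (sumset S T).
Proof.
move=> sH [[S0 SB] [s sE] SH] [[T0 TB] [t tE] TH]; split.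
- split; first exact: sumsetl.
  move=> _ _ [a [b [Sa [Tb ->]]]] [a' [b' [Sa' [Tb' ->]]]].
  by exists (a - a'), (b - b'); rewrite opprD addrACA; auto.
- exists [seq a + b | a <- s, b <- t] => x; split.
  + by move=> [a [b [/sE Sa [/tE Tb ->]]]]; apply/allpairsP; exists (a, b).
  + by move=> /allpairsP[[a b] /= [/sE Sa /tE Tb ->]]; exists a, b.
- by move=> _ [a [b [/SH Ha [/TH Hb ->]]]]; apply: subgroupD.
Qed.

Definition multiples h x := exists c : nat, x = h *+ c.

Lemma finite_subgroup_multiples H h n : is_subgroup H -> H h ->
  (0 < n)%N -> h *+ n = 0 -> finite_subgroup_of H (multiples h).
Proof.
move=> sH Hh n_gt0 hn0.
have hmod c : h *+ c = h *+ (c %% n).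
  by rewrite {1}(divn_eq c n) mulrnDr mulnC mulrnA hn0 mul0rn add0r.
split.
- split; first by exists 0%N.
  move=> _ _ [a ->] [b ->]; exists (a + n.-1 * b)%N.
  (* [- h *+ b = h *+ ((n - 1) * b)] since [h *+ (n * b) = 0]. *)
  rewrite mulrnDr; congr (_ + _); apply/eqP.
  rewrite eq_sym -subr_eq0 opprK -mulrnDr.
  by rewrite -[X in (_ + X)%N]mul1n -mulnDl addn1 prednK // mulrnA hn0 mul0rn.
- exists [seq h *+ c | c <- iota 0 n] => x; split.
  + by move=> [c ->]; rewrite hmod map_f // mem_iota ltn_mod n_gt0.
  + by move=> /mapP[c _ ->]; exists c.
- by move=> _ [c ->]; apply: subgroupMn.
Qed.

Lemma torsion_finite_decomposition H K (s : seq G) : torsion_group G ->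
  is_subgroup H -> is_subgroup K -> (forall x, sumset H K x) ->
  exists FH FK, [/\ finite_subgroup_of H FH, finite_subgroup_of K FK &
    forall x, x \in s -> sumset FH FK x].
Proof.
move=> tor sH sK HK; elim: s => [|x s [FH [FK [fFH fFK sFHK]]]].
  have fin0 L : is_subgroup L -> finite_subgroup_of L (multiples 0).
    by move=> sL; apply: (finite_subgroup_multiples (n := 1)) (subgroup0 sL) _ _.
  by exists (multiples 0), (multiples 0); split; try apply: fin0.
have [h [k [Hh [Kk ->]]]] := HK x.
have [[m [m_gt0 hm0]] [n [n_gt0 kn0]]] := (tor h, tor k).
have fh := finite_subgroup_multiples sH Hh m_gt0 hm0.
have fk := finite_subgroup_multiples sK Kk n_gt0 kn0.
have mult0 y : multiples y 0 by exists 0%N.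
have [[[FH0 _] _ _] [[FK0 _] _ _]] := (fFH, fFK).
exists (sumset (multiples h) FH), (sumset (multiples k) FK).
split; try exact: finite_subgroup_sumset.
move=> y; rewrite inE => /predU1P[->|/sFHK].
  by exists h, k; split; [|split=> //]; apply: sumsetl => //; exists 1%N.
by apply: sumset_sub => z; apply: sumsetr.
Qed.

End FiniteSubgroups.

Section ExpansiveFor.
Variable G : zmodType.
Variable O : (G -> Prop) -> nat -> G -> Prop.

(** [O S n] is an orbit sum of [S]: [pos_orbit_sum phi S n] or
  [orbit_sum phi psi S n], so that [expansive_for O H] unfolds to
  [pos_expansive_on H phi] resp. [expansive_on H phi psi]. *)
Definition expansive_for (H : G -> Prop) := exists S,
  finite_subgroup_of H S /\ forall F, finite_subgroup_of H F ->
    exists n : nat, forall x, F x -> O S n x.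

Hypothesis O_widen : forall S n m x, S 0 -> (n <= m)%N -> O S n x -> O S m x.
Hypothesis O_sumset : forall S T n x y,
  O S n x -> O T n y -> O (sumset S T) n (x + y).

Lemma expansive_for_sumset (H K : G -> Prop) : torsion_group G ->
  is_subgroup H -> is_subgroup K -> (forall x, sumset H K x) ->
  expansive_for H -> expansive_for K -> expansive_for (fun _ => True).
Proof.
move=> tor sH sK HK [SH [fSH SH_covers]] [SK [fSK SK_covers]].
have subT L S : finite_subgroup_of L S -> finite_subgroup_of (fun _ => True) S.
  exact: finite_subgroup_of_sub.
exists (sumset SH SK); split.
  by apply: finite_subgroup_sumset; [|exact: subT fSH|exact: subT fSK].
move=> F [_ [s sE] _].
have [FH [FK [fFH fFK sFHK]]] := torsion_finite_decomposition s tor sH sK HK.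
have [[nH cH] [nK cK]] := (SH_covers _ fFH, SK_covers _ fFK).
have [[[SH0 _] _ _] [[SK0 _] _ _]] := (fSH, fSK).
exists (maxn nH nK) => x /sE /sFHK [h [k [FHh [FKk ->]]]].
apply: O_sumset.
- by apply: O_widen (cH _ FHh) => //; apply: leq_maxl.
- by apply: O_widen (cK _ FKk) => //; apply: leq_maxr.
Qed.

End ExpansiveFor.

Section OrbitSums.
Variable G : zmodType.
Implicit Types (f : G -> G) (S T : G -> Prop).

Lemma iter_nmod_morphism f k : nmod_morphism f -> nmod_morphism (iter k f).
Proof.
move=> [f0 fD]; split; first exact: iter_fix.
by elim: k => // k IHk a b; rewrite !iterS IHk fD.
Qed.

Lemma pos_orbit_sum_widen f S n m x : nmod_morphism f -> S 0 -> (n <= m)%N ->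
  pos_orbit_sum f S n x -> pos_orbit_sum f S m x.
Proof.
move=> fM S0 le_nm [g [Sg ->]].
exists (fun k => if (k <= n)%N then g k else 0); split.
  by move=> k _; case: ifP => // /Sg.
rewrite (big_ord_widen m.+1 (fun k => iter k f (g k))) ?ltnS // big_mkcond.
apply: eq_bigr => k _; rewrite ltnS; case: ifP => // _.
by rewrite (iter_nmod_morphism k fM).1.
Qed.

Lemma pos_orbit_sumD f S T n x y : nmod_morphism f ->
  pos_orbit_sum f S n x -> pos_orbit_sum f T n y ->
  pos_orbit_sum f (sumset S T) n (x + y).
Proof.
move=> fM [g [Sg ->]] [g' [Tg' ->]].
exists (fun k => g k + g' k); split; first by move=> k le_kn; exists (g k), (g' k); auto.
by rewrite -big_split; apply: eq_bigr => k _; rewrite (iter_nmod_morphism k fM).2.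
Qed.

Lemma orbit_sumE phi psi S n x : orbit_sum phi psi S n x <->
  sumset (pos_orbit_sum phi S n) (pos_orbit_sum psi S n) x.
Proof.
split.
- move=> [g [h [Sgh ->]]]; rewrite big_split.
  exists (\sum_(k < n.+1) iter k phi (g k)), (\sum_(k < n.+1) iter k psi (h k)).
  by split; [exists g | split; [exists h|]]; split=> // k /Sgh[].
- move=> [_ [_ [[g [Sg ->]] [[h [Sh ->]] ->]]]].
  by exists g, h; rewrite big_split; split=> // k le_kn; split; [exact: Sg | exact: Sh].
Qed.

Lemma orbit_sum_widen phi psi S n m x : nmod_morphism phi -> nmod_morphism psi ->
  S 0 -> (n <= m)%N -> orbit_sum phi psi S n x -> orbit_sum phi psi S m x.
Proof.
move=> phiM psiM S0 le_nm /orbit_sumE xE; apply/orbit_sumE.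
by apply: sumset_sub xE => y; apply: pos_orbit_sum_widen.
Qed.

Lemma orbit_sumD phi psi S T n x y : nmod_morphism phi -> nmod_morphism psi ->
  orbit_sum phi psi S n x -> orbit_sum phi psi T n y ->
  orbit_sum phi psi (sumset S T) n (x + y).
Proof.
move=> phiM psiM /orbit_sumE[a [b [Pa [Pb ->]]]] /orbit_sumE[a' [b' [Pa' [Pb' ->]]]].
by apply/orbit_sumE; exists (a + a'), (b + b'); rewrite addrACA;
  split; [|split]; try apply: pos_orbit_sumD.
Qed.

End OrbitSums.

Theorem proposition2p8 (G : zmodType) (H K : G -> Prop) :
  torsion_group G ->
  is_subgroup H -> is_subgroup K ->
  (forall x : G, exists h k, H h /\ K k /\ x = h + k) ->
  (forall phi : {additive G -> G},
     (forall x, H x -> H (phi x)) -> (forall x, K x -> K (phi x)) ->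
     pos_expansive_on H phi -> pos_expansive_on K phi ->
     pos_expansive phi) /\
  (forall (phi : {additive G -> G}) (psi : G -> G),
     cancel phi psi -> cancel psi phi ->
     (forall x, H x -> H (phi x)) -> (forall x, H x -> H (psi x)) ->
     (forall x, K x -> K (phi x)) -> (forall x, K x -> K (psi x)) ->
     expansive_on H phi psi -> expansive_on K phi psi ->
     expansive phi psi).
Proof.
(* The invariance hypotheses only make the restrictions meaningful in the
   paper; the encoding [pos_expansive_on] / [expansive_on] does not need them. *)
move=> tor sH sK HK; split.
- move=> phi _ _; have phiM : nmod_morphism phi := (raddf0 phi, raddfD phi).
  apply: (expansive_for_sumset (O := pos_orbit_sum phi) _ _ tor sH sK HK).
  + by move=> S n m x; apply: pos_orbit_sum_widen.
  + by move=> S T n x y; apply: pos_orbit_sumD.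
- move=> phi psi phiK psiK _ _ _ _.
  have phiM : nmod_morphism phi := (raddf0 phi, raddfD phi).
  have psiM : nmod_morphism psi := can2_nmod_morphism phiK psiK.
  apply: (expansive_for_sumset (O := orbit_sum phi psi) _ _ tor sH sK HK).
  + by move=> S n m x; apply: orbit_sum_widen.
  + by move=> S T n x y; apply: orbit_sumD.
Qed.
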